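(* In a coherent differential summable resource category $\mathcal L$ (see context), let $l\in\mathcal L(X_0\otimes\cdots\otimes X_n,Y)$. Then $D\mathcal M(l)\in\mathcal L_!(SX_0\&\cdots\&SX_n,SY)$ satisfies $$\lambda(\pi_0)\circ_!D\mathcal M(l)=\mathcal M(l)\circ_!(\lambda(\pi_0)\&_!\cdots\&_!\lambda(\pi_0)),$$ $$\lambda(\pi_1)\circ_!D\mathcal M(l)=\sum_{i=0}^n\mathcal M(l)\circ_!(\lambda(\pi_0)\&_!\cdots\&_!\lambda(\pi_1)\&_!\cdots\&_!\lambda(\pi_0)),$$ where in the $i$-th summand $\lambda(\pi_1)$ stands in position $i$ and $\lambda(\pi_0)$ in all other positions.
   Context: $\mathcal L$ is a symmetric monoidal closed category with finite products ($\&$, projections $p_i$, terminal $\top$), resource comonad $(!,\mathrm{der},\mathrm{dig})$ and Seely isomorphisms $m^0,m^2$; $m^n\in\mathcal L(!X_0\otimes\cdots\otimes!X_n,!(X_0\&\cdots\&X_n))$ is the induced $(n+1)$-ary Seely isomorphism. Kleisli category $\mathcal L_!$: $\mathcal L_!(X,Y)=\mathcal L(!X,Y)$, $g\circ_!f=g\circ!f\circ\mathrm{dig}_X$; $\lambda(h)=h\circ\mathrm{der}_X$; for $f_i\in\mathcal L_!(X_i,Y_i)$, $f_0\&_!\cdots\&_!f_n=\langle f_i\circ_!\lambda(p_i)\rangle_i$. For $l\in\mathcal L(X_0\otimes\cdots\otimes X_n,Y)$, $\mathcal M(l)=l\circ(\mathrm{der}_{X_0}\otimes\cdots\otimes\mathrm{der}_{X_n})\circ(m^n)^{-1}$.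 $\mathcal L$ has zero morphisms and a summability structure $(S,\pi_0,\pi_1,\sigma)$ ($\pi_0,\pi_1$ jointly monic, $f_0+f_1=\sigma\langle f_0,f_1\rangle$) satisfying the axioms of Ehrhard's coherent differentiation (homsets partial commutative monoids, composition and $\otimes$ distribute over defined sums); $\iota_0=\langle\mathrm{id},0\rangle$; $\tau$ with $\pi_0\tau=\pi_0\pi_0$, $\pi_1\tau=\pi_1\pi_0+\pi_0\pi_1$; flip $c$ with $\pi_i\pi_jc=\pi_j\pi_i$; $S$ preserves products strictly; $L_{X_0,X_1}\in\mathcal L(SX_0\otimes SX_1,S(X_0\otimes X_1))$ with $\pi_0L=\pi_0\otimes\pi_0$, $\pi_1L=\pi_1\otimes\pi_0+\pi_0\otimes\pi_1$. A natural $\partial_X\in\mathcal L(!SX,S!X)$ satisfies: $\pi_0\partial_X=!\pi_0$; $\partial_X\circ!\iota_0=\iota_0$, $\tau\circ S\partial_X\circ\partial_{SX}=\partial_X\circ!\tau$; $S\mathrm{der}_X\circ\partial_X=\mathrm{der}_{SX}$, $S\mathrm{dig}_X\circ\partial_X=\partial_{!X}\circ!\partial_X\circ\mathrm{dig}_{SX}$; $S(m^0)^{-1}\partial_\top=\iota_0(m^0)^{-1}!0$, $S(m^2)^{-1}\partial_{X_0\&X_1}=L_{!X_0,!X_1}(\partial_{X_0}\otimes\partial_{X_1})(m^2_{SX_0,SX_1})^{-1}$; $c\circ S\partial_X\circ\partial_{SX}=S\partial_X\circ\partial_{SX}\circ!c$. $D$ is the functor on $\mathcal L_!$ with $DX=SX$,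 $Df=Sf\circ\partial_X$. *)

From Stdlib Require Import List Arith.
Import ListNotations.

Set Implicit Arguments.

Record CDRC : Type := {
  Ob : Type;
  Hom : Ob -> Ob -> Type;
  idm : forall X, Hom X X;
  comp : forall X Y Z, Hom Y Z -> Hom X Y -> Hom X Z;
  comp_assoc : forall X Y Z W (h : Hom Z W) (g : Hom Y Z) (f : Hom X Y),
      comp h (comp g f) = comp (comp h g) f;
  comp_id_l : forall X Y (f : Hom X Y), comp (idm Y) f = f;
  comp_id_r : forall X Y (f : Hom X Y), comp f (idm X) = f;

  tens : Ob -> Ob -> Ob;
  tensm : forall X X' Y Y', Hom X Y -> Hom X' Y' -> Hom (tens X X') (tens Y Y');
  tensm_id : forall X Y, tensm (idm X) (idm Y) = idm (tens X Y);
  tensm_comp : forall X X' Y Y' Z Z' (g : Hom Y Z) (g' : Hom Y' Z')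
      (f : Hom X Y) (f' : Hom X' Y'),
      tensm (comp g f) (comp g' f') = comp (tensm g g') (tensm f f');
  unitI : Ob;
  assoc : forall X Y Z, Hom (tens (tens X Y) Z) (tens X (tens Y Z));
  assoc_inv : forall X Y Z, Hom (tens X (tens Y Z)) (tens (tens X Y) Z);
  assoc_iso1 : forall X Y Z, comp (assoc_inv X Y Z) (assoc X Y Z) = idm _;
  assoc_iso2 : forall X Y Z, comp (assoc X Y Z) (assoc_inv X Y Z) = idm _;
  assoc_nat : forall X Y Z X' Y' Z' (f : Hom X X') (g : Hom Y Y') (h : Hom Z Z'),
      comp (assoc X' Y' Z') (tensm (tensm f g) h)
      = comp (tensm f (tensm g h)) (assoc X Y Z);
  lunit : forall X, Hom (tens unitI X) X;
  lunit_inv : forall X, Hom X (tens unitI X);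
  lunit_iso1 : forall X, comp (lunit_inv X) (lunit X) = idm _;
  lunit_iso2 : forall X, comp (lunit X) (lunit_inv X) = idm _;
  lunit_nat : forall X Y (f : Hom X Y),
      comp (lunit Y) (tensm (idm unitI) f) = comp f (lunit X);
  runit : forall X, Hom (tens X unitI) X;
  runit_inv : forall X, Hom X (tens X unitI);
  runit_iso1 : forall X, comp (runit_inv X) (runit X) = idm _;
  runit_iso2 : forall X, comp (runit X) (runit_inv X) = idm _;
  runit_nat : forall X Y (f : Hom X Y),
      comp (runit Y) (tensm f (idm unitI)) = comp f (runit X);
  sym : forall X Y, Hom (tens X Y) (tens Y X);
  sym_inv : forall X Y, comp (sym Y X) (sym X Y) = idm _;
  sym_nat : forall X Y X' Y' (f : Hom X X') (g : Hom Y Y'),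
      comp (sym X' Y') (tensm f g) = comp (tensm g f) (sym X Y);
  pentagon : forall X Y Z W,
      comp (assoc X Y (tens Z W)) (assoc (tens X Y) Z W)
      = comp (tensm (idm X) (assoc Y Z W))
          (comp (assoc X (tens Y Z) W) (tensm (assoc X Y Z) (idm W)));
  triangle : forall X Y,
      comp (tensm (idm X) (lunit Y)) (assoc X unitI Y) = tensm (runit X) (idm Y);
  hexagon : forall X Y Z,
      comp (assoc Y Z X) (comp (sym X (tens Y Z)) (assoc X Y Z))
      = comp (tensm (idm Y) (sym X Z))
          (comp (assoc Y X Z) (tensm (sym X Y) (idm Z)));
  lolli : Ob -> Ob -> Ob;
  ev : forall X Y, Hom (tens (lolli X Y) X) Y;
  cur : forall Z X Y, Hom (tens Z X) Y -> Hom Z (lolli X Y);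
  cur_beta : forall Z X Y (f : Hom (tens Z X) Y),
      comp (ev X Y) (tensm (cur f) (idm X)) = f;
  cur_eta : forall Z X Y (g : Hom Z (lolli X Y)),
      cur (comp (ev X Y) (tensm g (idm X))) = g;

  with_ : Ob -> Ob -> Ob;
  pr1 : forall X Y, Hom (with_ X Y) X;
  pr2 : forall X Y, Hom (with_ X Y) Y;
  pair : forall Z X Y, Hom Z X -> Hom Z Y -> Hom Z (with_ X Y);
  pair_pr1 : forall Z X Y (f : Hom Z X) (g : Hom Z Y), comp (pr1 X Y) (pair f g) = f;
  pair_pr2 : forall Z X Y (f : Hom Z X) (g : Hom Z Y), comp (pr2 X Y) (pair f g) = g;
  pair_eta : forall Z X Y (h : Hom Z (with_ X Y)),
      pair (comp (pr1 X Y) h) (comp (pr2 X Y) h) = h;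
  top : Ob;
  term : forall X, Hom X top;
  term_uniq : forall X (f : Hom X top), f = term X;

  bang : Ob -> Ob;
  bangm : forall X Y, Hom X Y -> Hom (bang X) (bang Y);
  bangm_id : forall X, bangm (idm X) = idm (bang X);
  bangm_comp : forall X Y Z (g : Hom Y Z) (f : Hom X Y),
      bangm (comp g f) = comp (bangm g) (bangm f);
  der : forall X, Hom (bang X) X;
  dig : forall X, Hom (bang X) (bang (bang X));
  der_nat : forall X Y (f : Hom X Y), comp (der Y) (bangm f) = comp f (der X);
  dig_nat : forall X Y (f : Hom X Y),
      comp (dig Y) (bangm f) = comp (bangm (bangm f)) (dig X);
  comonad1 : forall X, comp (der (bang X)) (dig X) = idm _;
  comonad2 : forall X, comp (bangm (der X)) (dig X) = idm _;
  comonad3 : forall X, comp (dig (bang X)) (dig X) = comp (bangm (dig X)) (dig X);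

  m0 : Hom unitI (bang top);
  m0_inv : Hom (bang top) unitI;
  m0_iso1 : comp m0_inv m0 = idm _;
  m0_iso2 : comp m0 m0_inv = idm _;
  m2 : forall X Y, Hom (tens (bang X) (bang Y)) (bang (with_ X Y));
  m2_inv : forall X Y, Hom (bang (with_ X Y)) (tens (bang X) (bang Y));
  m2_iso1 : forall X Y, comp (m2_inv X Y) (m2 X Y) = idm _;
  m2_iso2 : forall X Y, comp (m2 X Y) (m2_inv X Y) = idm _;
  m2_nat : forall X Y X' Y' (f : Hom X X') (g : Hom Y Y'),
      comp (bangm (pair (comp f (pr1 X Y)) (comp g (pr2 X Y)))) (m2 X Y)
      = comp (m2 X' Y') (tensm (bangm f) (bangm g));
  m2_assoc : forall X Y Z,
      comp (bangm (pair (comp (pr1 X Y) (pr1 (with_ X Y) Z))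
                        (pair (comp (pr2 X Y) (pr1 (with_ X Y) Z)) (pr2 (with_ X Y) Z))))
           (comp (m2 (with_ X Y) Z) (tensm (m2 X Y) (idm (bang Z))))
      = comp (m2 X (with_ Y Z))
          (comp (tensm (idm (bang X)) (m2 Y Z)) (assoc (bang X) (bang Y) (bang Z)));
  m2_unit : forall X,
      comp (m2 top X) (tensm m0 (idm (bang X)))
      = comp (bangm (pair (term X) (idm X))) (lunit (bang X));
  m2_sym : forall X Y,
      comp (m2 Y X) (sym (bang X) (bang Y))
      = comp (bangm (pair (pr2 X Y) (pr1 X Y))) (m2 X Y);
  m2_dig : forall X Y,
      comp (bangm (pair (bangm (pr1 X Y)) (bangm (pr2 X Y))))
           (comp (dig (with_ X Y)) (m2 X Y))
      = comp (m2 (bang X) (bang Y)) (tensm (dig X) (dig Y));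
  m0_dig : comp (bangm (term (bang top))) (comp (dig top) m0) = m0;

  zero : forall X Y, Hom X Y;
  zero_comp_l : forall X Y Z (f : Hom X Y), comp (zero Y Z) f = zero X Z;
  zero_comp_r : forall X Y Z (g : Hom Y Z), comp g (zero X Y) = zero X Z;
  S : Ob -> Ob;
  Sm : forall X Y, Hom X Y -> Hom (S X) (S Y);
  Sm_id : forall X, Sm (idm X) = idm (S X);
  Sm_comp : forall X Y Z (g : Hom Y Z) (f : Hom X Y), Sm (comp g f) = comp (Sm g) (Sm f);
  pi0 : forall X, Hom (S X) X;
  pi1 : forall X, Hom (S X) X;
  sigma : forall X, Hom (S X) X;
  pi0_nat : forall X Y (f : Hom X Y), comp (pi0 Y) (Sm f) = comp f (pi0 X);
  pi1_nat : forall X Y (f : Hom X Y), comp (pi1 Y) (Sm f) = comp f (pi1 X);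
  sigma_nat : forall X Y (f : Hom X Y), comp (sigma Y) (Sm f) = comp f (sigma X);
  pi_jmono : forall Z X (f g : Hom Z (S X)),
      comp (pi0 X) f = comp (pi0 X) g -> comp (pi1 X) f = comp (pi1 X) g -> f = g;
  (* partial commutative monoid structure on homsets, sums defined via S *)
  sum_zero : forall X Y (f : Hom X Y), exists h : Hom X (S Y),
      comp (pi0 Y) h = f /\ comp (pi1 Y) h = zero X Y /\ comp (sigma Y) h = f;
  sum_comm : forall X Y (h : Hom X (S Y)), exists h' : Hom X (S Y),
      comp (pi0 Y) h' = comp (pi1 Y) h /\ comp (pi1 Y) h' = comp (pi0 Y) h
      /\ comp (sigma Y) h' = comp (sigma Y) h;
  sum_assoc : forall X Y (h : Hom X (S Y)) (k : Hom X (S Y)),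
      comp (pi0 Y) k = comp (sigma Y) h ->
      exists (h' : Hom X (S Y)) (k' : Hom X (S Y)),
        comp (pi0 Y) h' = comp (pi1 Y) h /\ comp (pi1 Y) h' = comp (pi1 Y) k /\
        comp (pi0 Y) k' = comp (pi0 Y) h /\ comp (pi1 Y) k' = comp (sigma Y) h' /\
        comp (sigma Y) k' = comp (sigma Y) k;
  sum_assoc' : forall X Y (h : Hom X (S Y)) (k : Hom X (S Y)),
      comp (pi1 Y) k = comp (sigma Y) h ->
      exists (h' : Hom X (S Y)) (k' : Hom X (S Y)),
        comp (pi0 Y) h' = comp (pi0 Y) k /\ comp (pi1 Y) h' = comp (pi0 Y) h /\
        comp (pi0 Y) k' = comp (sigma Y) h' /\ comp (pi1 Y) k' = comp (pi1 Y) h /\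
        comp (sigma Y) k' = comp (sigma Y) k;
  sum_comp : forall X' X Y Y' (g : Hom Y Y') (h : Hom X (S Y)) (u : Hom X' X),
      exists h' : Hom X' (S Y'),
        comp (pi0 Y') h' = comp g (comp (comp (pi0 Y) h) u) /\
        comp (pi1 Y') h' = comp g (comp (comp (pi1 Y) h) u) /\
        comp (sigma Y') h' = comp g (comp (comp (sigma Y) h) u);
  sum_tens_l : forall X Y X' Y' (h : Hom X (S Y)) (k : Hom X' Y'),
      exists h' : Hom (tens X X') (S (tens Y Y')),
        comp (pi0 _) h' = tensm (comp (pi0 Y) h) k /\
        comp (pi1 _) h' = tensm (comp (pi1 Y) h) k /\
        comp (sigma _) h' = tensm (comp (sigma Y) h) k;
  sum_tens_r : forall X Y X' Y' (k : Hom X' Y') (h : Hom X (S Y)),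
      exists h' : Hom (tens X' X) (S (tens Y' Y)),
        comp (pi0 _) h' = tensm k (comp (pi0 Y) h) /\
        comp (pi1 _) h' = tensm k (comp (pi1 Y) h) /\
        comp (sigma _) h' = tensm k (comp (sigma Y) h);
  zero_tens_l : forall X Y X' Y' (k : Hom X' Y'), tensm (zero X Y) k = zero _ _;
  zero_tens_r : forall X Y X' Y' (k : Hom X' Y'), tensm k (zero X Y) = zero _ _;
  iota0 : forall X, Hom X (S X);
  iota0_pi0 : forall X, comp (pi0 X) (iota0 X) = idm X;
  iota0_pi1 : forall X, comp (pi1 X) (iota0 X) = zero X X;
  (* tau : S^2 X -> S X, pi0 tau = pi0 pi0, pi1 tau = pi1 pi0 + pi0 pi1 *)
  tau : forall X, Hom (S (S X)) (S X);
  tau_pi0 : forall X, comp (pi0 X) (tau X) = comp (pi0 X) (pi0 (S X));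
  tau_pi1 : forall X, exists w : Hom (S (S X)) (S X),
      comp (pi0 X) w = comp (pi1 X) (pi0 (S X)) /\
      comp (pi1 X) w = comp (pi0 X) (pi1 (S X)) /\
      comp (sigma X) w = comp (pi1 X) (tau X);
  flip : forall X, Hom (S (S X)) (S (S X));
  flip_00 : forall X, comp (pi0 X) (comp (pi0 (S X)) (flip X)) = comp (pi0 X) (pi0 (S X));
  flip_01 : forall X, comp (pi0 X) (comp (pi1 (S X)) (flip X)) = comp (pi1 X) (pi0 (S X));
  flip_10 : forall X, comp (pi1 X) (comp (pi0 (S X)) (flip X)) = comp (pi0 X) (pi1 (S X));
  flip_11 : forall X, comp (pi1 X) (comp (pi1 (S X)) (flip X)) = comp (pi1 X) (pi1 (S X));
  Sw_inv : forall X Y, Hom (with_ (S X) (S Y)) (S (with_ X Y));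
  Sw_iso1 : forall X Y,
      comp (Sw_inv X Y) (pair (Sm (pr1 X Y)) (Sm (pr2 X Y))) = idm _;
  Sw_iso2 : forall X Y,
      comp (pair (Sm (pr1 X Y)) (Sm (pr2 X Y))) (Sw_inv X Y) = idm _;
  Stop_inv : Hom top (S top);
  Stop_iso : comp Stop_inv (term (S top)) = idm _;
  Lm : forall X Y, Hom (tens (S X) (S Y)) (S (tens X Y));
  Lm_pi0 : forall X Y, comp (pi0 _) (Lm X Y) = tensm (pi0 X) (pi0 Y);
  Lm_pi1 : forall X Y, exists w : Hom (tens (S X) (S Y)) (S (tens X Y)),
      comp (pi0 _) w = tensm (pi1 X) (pi0 Y) /\
      comp (pi1 _) w = tensm (pi0 X) (pi1 Y) /\
      comp (sigma _) w = comp (pi1 _) (Lm X Y);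

  dd : forall X, Hom (bang (S X)) (S (bang X));
  dd_nat : forall X Y (f : Hom X Y),
      comp (dd Y) (bangm (Sm f)) = comp (Sm (bangm f)) (dd X);
  dd_pi0 : forall X, comp (pi0 _) (dd X) = bangm (pi0 X);
  dd_iota0 : forall X, comp (dd X) (bangm (iota0 X)) = iota0 (bang X);
  dd_tau : forall X,
      comp (tau _) (comp (Sm (dd X)) (dd (S X))) = comp (dd X) (bangm (tau X));
  dd_der : forall X, comp (Sm (der X)) (dd X) = der (S X);
  dd_dig : forall X,
      comp (Sm (dig X)) (dd X) = comp (dd (bang X)) (comp (bangm (dd X)) (dig (S X)));
  dd_m0 : comp (Sm m0_inv) (dd top)
          = comp (iota0 unitI) (comp m0_inv (bangm (zero (S top) top)));
  dd_m2 : forall X Y,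
      comp (Sm (m2_inv X Y)) (dd (with_ X Y))
      = comp (Lm (bang X) (bang Y))
          (comp (tensm (dd X) (dd Y))
             (comp (m2_inv (S X) (S Y)) (bangm (pair (Sm (pr1 X Y)) (Sm (pr2 X Y))))));
  dd_flip : forall X,
      comp (flip _) (comp (Sm (dd X)) (dd (S X)))
      = comp (Sm (dd X)) (comp (dd (S X)) (bangm (flip X)))
}.

Arguments idm {_} X.
Arguments comp {_ X Y Z} g f.
Arguments tens {_} X Y.
Arguments tensm {_ X X' Y Y'} f g.
Arguments with_ {_} X Y.
Arguments pr1 {_} X Y.
Arguments pr2 {_} X Y.
Arguments pair {_ Z X Y} f g.
Arguments bang {_} X.
Arguments bangm {_ X Y} f.
Arguments der {_} X.
Arguments dig {_} X.
Arguments m2 {_} X Y.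
Arguments m2_inv {_} X Y.
Arguments zero {_} X Y.
Arguments S {_} X.
Arguments Sm {_ X Y} f.
Arguments pi0 {_} X.
Arguments pi1 {_} X.
Arguments sigma {_} X.
Arguments dd {_} X.

Unset Implicit Arguments.
Section Derived.
Variable C : CDRC.

Definition shift (X : nat -> Ob C) : nat -> Ob C := fun k => X (Datatypes.S k).

Fixpoint withn (n : nat) (X : nat -> Ob C) : Ob C :=
  match n with
  | 0 => X 0
  | Datatypes.S n' => with_ (X 0) (withn n' (shift X))
  end.

Fixpoint tensn (n : nat) (X : nat -> Ob C) : Ob C :=
  match n with
  | 0 => X 0
  | Datatypes.S n' => tens (X 0) (tensn n' (shift X))
  end.

(* i-th projection p_i of the n-ary product (meaningful for i <= n;
   for i > n it is, by convention, the zero morphism and is never used) *)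
Fixpoint projn (n : nat) (X : nat -> Ob C) (i : nat) {struct n} : Hom C (withn n X) (X i) :=
  match n as n0 return Hom C (withn n0 X) (X i) with
  | 0 => match i as i0 return Hom C (X 0) (X i0) with
         | 0 => idm (X 0)
         | Datatypes.S _ => zero _ _
         end
  | Datatypes.S n' =>
      match i as i0 return Hom C (with_ (X 0) (withn n' (shift X))) (X i0) with
      | 0 => pr1 _ _
      | Datatypes.S k => comp (projn n' (shift X) k) (pr2 _ _)
      end
  end.

Fixpoint tuplen (n : nat) (Z : Ob C) (X : nat -> Ob C)
    (g : forall i, Hom C Z (X i)) {struct n} : Hom C Z (withn n X) :=
  match n as n0 return Hom C Z (withn n0 X) with
  | 0 => g 0
  | Datatypes.S n' => pair (g 0) (tuplen n' Z (shift X) (fun k => g (Datatypes.S k)))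
  end.

Fixpoint tensmn (n : nat) (X Y : nat -> Ob C)
    (f : forall i, Hom C (X i) (Y i)) {struct n} : Hom C (tensn n X) (tensn n Y) :=
  match n as n0 return Hom C (tensn n0 X) (tensn n0 Y) with
  | 0 => f 0
  | Datatypes.S n' => tensm (f 0) (tensmn n' (shift X) (shift Y) (fun k => f (Datatypes.S k)))
  end.

Fixpoint seelyn (n : nat) (X : nat -> Ob C) {struct n} :
    Hom C (tensn n (fun i => bang (X i))) (bang (withn n X)) :=
  match n as n0 return Hom C (tensn n0 (fun i => bang (X i))) (bang (withn n0 X)) with
  | 0 => idm _
  | Datatypes.S n' => comp (m2 _ _) (tensm (idm _) (seelyn n' (shift X)))
  end.

Fixpoint seelyn_inv (n : nat) (X : nat -> Ob C) {struct n} :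
    Hom C (bang (withn n X)) (tensn n (fun i => bang (X i))) :=
  match n as n0 return Hom C (bang (withn n0 X)) (tensn n0 (fun i => bang (X i))) with
  | 0 => idm _
  | Datatypes.S n' => comp (tensm (idm _) (seelyn_inv n' (shift X))) (m2_inv _ _)
  end.

Definition kcomp {X Y Z : Ob C} (g : Hom C (bang Y) Z) (f : Hom C (bang X) Y)
  : Hom C (bang X) Z := comp g (comp (bangm f) (dig X)).

Definition lam {X Y : Ob C} (h : Hom C X Y) : Hom C (bang X) Y := comp h (der X).

Definition withKn (n : nat) (X Y : nat -> Ob C)
    (f : forall i, Hom C (bang (X i)) (Y i)) : Hom C (bang (withn n X)) (withn n Y) :=
  tuplen n (bang (withn n X)) Y (fun i => kcomp (f i) (lam (projn n X i))).

Definition Mlin (n : nat) (X : nat -> Ob C) (Y : Ob C) (l : Hom C (tensn n X) Y)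
  : Hom C (bang (withn n X)) Y :=
  comp l (comp (tensmn n (fun i => bang (X i)) X (fun i => der (X i))) (seelyn_inv n X)).

Definition Dk {X Y : Ob C} (f : Hom C (bang X) Y) : Hom C (bang (S X)) (S Y) :=
  comp (Sm f) (dd X).

(* canonical comparison S(X_0 & ... & X_n) -> S X_0 & ... & S X_n,
   i.e. < S p_i >_i (an identity under the strict identification) *)
Definition Swn (n : nat) (X : nat -> Ob C) : Hom C (S (withn n X)) (withn n (fun i => S (X i))) :=
  tuplen n (S (withn n X)) (fun i => S (X i)) (fun i => Sm (projn n X i)).

Definition Sum2 {X Y : Ob C} (f g s : Hom C X Y) : Prop :=
  exists h : Hom C X (S Y), comp (pi0 Y) h = f /\ comp (pi1 Y) h = g /\ comp (sigma Y) h = s.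

Fixpoint IsSum {X Y : Ob C} (fs : list (Hom C X Y)) (s : Hom C X Y) : Prop :=
  match fs with
  | [] => s = zero X Y
  | f :: fs' => exists t, IsSum fs' t /\ Sum2 f t s
  end.

End Derived.

From Stdlib Require Import List Arith ssreflect.
Import ListNotations.

(* Both sides of each identity factor through the Seely isomorphism.  Iterating
   the axiom that relates the differential ∂ to m^2 gives
     S (m^n)^{-1} ∘ ∂ = L^n ∘ (∂ ⊗ ⋯ ⊗ ∂) ∘ (m^n)^{-1} ∘ !⟨S p_i⟩_i,
   where L^n is the n-fold iterate of L.  Now π0 ∘ L^n = π0 ⊗ ⋯ ⊗ π0, while
   π1 ∘ L^n is the Leibniz sum over j of the tensors with π1 in slot j and π0
   elsewhere; moreover der ∘ !π_b = der ∘ π_b ∘ ∂.  Postcomposing with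
   l ∘ (der ⊗ ⋯ ⊗ der) gives both identities. *)

Local Notation "n .+1" := (Datatypes.S n) (at level 2, left associativity, format "n .+1").

Section Development.
Context {C : CDRC}.

Lemma comp_eqA {A B D : Ob C} (x : Hom C B D) (y : Hom C A B) (z : Hom C A D) :
  comp x y = z -> forall W (w : Hom C W A), comp x (comp y w) = comp z w.
Proof. by move=> xyz W w; rewrite comp_assoc xyz. Qed.

Lemma pair_comp {Z Z' A B : Ob C} (f : Hom C Z A) (g : Hom C Z B) (u : Hom C Z' Z) :
  comp (pair f g) u = pair (comp f u) (comp g u).
Proof.
  by rewrite -(pair_eta _ _ _ _ (comp (pair f g) u)) !comp_assoc pair_pr1 pair_pr2.
Qed.

Lemma tuplen_comp n : forall Z Z' A (g : forall i, Hom C Z (A i)) (u : Hom C Z' Z),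
  comp (tuplen C n Z A g) u = tuplen C n Z' A (fun i => comp (g i) u).
Proof. by elim: n => [|n IHn] Z Z' A g u //=; rewrite pair_comp IHn. Qed.

Lemma tuplen_ext n : forall Z A (f g : forall i, Hom C Z (A i)),
  (forall i, f i = g i) -> tuplen C n Z A f = tuplen C n Z A g.
Proof. by elim: n => [|n IHn] Z A f g fg /=; rewrite fg // (IHn _ _ _ _ (fun i => fg _)). Qed.

Lemma tensmn_ext n : forall A B (f g : forall i, Hom C (A i) (B i)),
  (forall i, f i = g i) -> tensmn C n A B f = tensmn C n A B g.
Proof. by elim: n => [|n IHn] A B f g fg /=; rewrite fg // (IHn _ _ _ _ (fun i => fg _)). Qed.

Lemma tensmn_comp n : forall (A B D : nat -> Ob C) (g : forall i, Hom C (B i) (D i))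
    (f : forall i, Hom C (A i) (B i)),
  tensmn C n A D (fun i => comp (g i) (f i)) = comp (tensmn C n B D g) (tensmn C n A B f).
Proof.
  elim: n => [|n IHn] A B D g f //=.
  by rewrite -tensm_comp (IHn (shift C A) (shift C B) (shift C D)).
Qed.

Lemma kcomp_lam_l {A B D : Ob C} (h : Hom C B D) (f : Hom C (bang A) B) :
  kcomp C (lam C h) f = comp h f.
Proof.
  rewrite /kcomp /lam -comp_assoc (comp_eqA _ _ _ (der_nat _ _ _ f)) -comp_assoc.
  by rewrite comonad1 comp_id_r.
Qed.

Lemma kcomp_lam_r {A B D : Ob C} (g : Hom C (bang B) D) (h : Hom C A B) :
  kcomp C g (lam C h) = comp g (bangm h).
Proof. by rewrite /kcomp /lam bangm_comp -comp_assoc comonad2 comp_id_r. Qed.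

Lemma withKn_lam n (A B : nat -> Ob C) (g : forall i, Hom C (S (A i)) (B i)) :
  withKn C n (fun i => S (A i)) B (fun i => lam C (g i))
  = lam C (tuplen C n _ B (fun i => comp (g i) (projn C n (fun i => S (A i)) i))).
Proof.
  rewrite /withKn /lam tuplen_comp; apply: tuplen_ext => i.
  by rewrite kcomp_lam_l /lam comp_assoc.
Qed.

Definition pib (b : bool) (A : Ob C) : Hom C (S A) A := if b then pi1 A else pi0 A.

Lemma lam_if_pi b (A : Ob C) :
  (if b then lam C (pi1 A) else lam C (pi0 A)) = lam C (pib b A).
Proof. by case: b. Qed.

Lemma pib_nat b {A B : Ob C} (f : Hom C A B) : comp (pib b B) (Sm f) = comp f (pib b A).
Proof. by case: b; [apply: pi1_nat | apply: pi0_nat]. Qed.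

Lemma der_bangm_pib b (A : Ob C) :
  comp (der A) (bangm (pib b A)) = comp (der A) (comp (pib b (bang A)) (dd A)).
Proof. by rewrite der_nat -dd_der comp_assoc pib_nat -comp_assoc. Qed.

Definition pibs n (b : nat -> bool) (A : nat -> Ob C) :
  Hom C (tensn C n (fun i => S (A i))) (tensn C n A) :=
  tensmn C n (fun i => S (A i)) A (fun i => pib (b i) (A i)).

Definition ders n (A : nat -> Ob C) : Hom C (tensn C n (fun i => bang (A i))) (tensn C n A) :=
  tensmn C n (fun i => bang (A i)) A (fun i => der (A i)).

Definition dds n (A : nat -> Ob C) :
  Hom C (tensn C n (fun i => bang (S (A i)))) (tensn C n (fun i => S (bang (A i)))) :=
  tensmn C n (fun i => bang (S (A i))) (fun i => S (bang (A i))) (fun i => dd (A i)).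

Lemma ders_bangm_pibs n (b : nat -> bool) (A : nat -> Ob C) :
  comp (ders n A)
       (tensmn C n (fun i => bang (S (A i))) (fun i => bang (A i))
          (fun i => bangm (pib (b i) (A i))))
  = comp (ders n A) (comp (pibs n b (fun i => bang (A i))) (dds n A)).
Proof.
  rewrite /ders /pibs /dds -!tensmn_comp; apply: tensmn_ext => i.
  exact: der_bangm_pib.
Qed.

Lemma m2_inv_nat {A B A' B' : Ob C} (f : Hom C A A') (g : Hom C B B') :
  comp (m2_inv A' B') (bangm (pair (comp f (pr1 A B)) (comp g (pr2 A B))))
  = comp (tensm (bangm f) (bangm g)) (m2_inv A B).
Proof.
  rewrite -(comp_id_r _ _ _ (comp (m2_inv A' B') _)) -(m2_iso2 _ A B) -!comp_assoc.
  rewrite (comp_eqA _ _ _ (m2_nat _ _ _ _ _ f g)) -!comp_assoc.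
  by rewrite (comp_eqA _ _ _ (m2_iso1 _ _ _)) comp_id_l.
Qed.

Lemma seelyn_inv_nat n : forall (A B : nat -> Ob C) (f : forall i, Hom C (A i) (B i)),
  comp (seelyn_inv C n B) (bangm (tuplen C n _ B (fun i => comp (f i) (projn C n A i))))
  = comp (tensmn C n (fun i => bang (A i)) (fun i => bang (B i)) (fun i => bangm (f i)))
         (seelyn_inv C n A).
Proof.
  elim: n => [|n IHn] A B f /=; first by rewrite comp_id_l !comp_id_r.
  have -> : tuplen C n _ (shift C B) (fun k => comp (f k.+1) (projn C n.+1 A k.+1))
          = comp (tuplen C n _ (shift C B) (fun k => comp (f k.+1) (projn C n (shift C A) k)))
                 (pr2 _ _).
  { by rewrite tuplen_comp; apply: tuplen_ext => k; rewrite /= comp_assoc. }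
  rewrite -comp_assoc m2_inv_nat comp_assoc -tensm_comp.
  rewrite (IHn (shift C A) (shift C B) (fun k => f k.+1)).
  by rewrite comp_id_l comp_assoc -tensm_comp comp_id_r.
Qed.

Fixpoint Lmn n (A : nat -> Ob C) {struct n} :
  Hom C (tensn C n (fun i => S (A i))) (S (tensn C n A)) :=
  match n as n0 return Hom C (tensn C n0 (fun i => S (A i))) (S (tensn C n0 A)) with
  | 0 => idm _
  | n'.+1 => comp (Lm C (A 0) (tensn C n' (shift C A))) (tensm (idm _) (Lmn n' (shift C A)))
  end.

Lemma Lmn_pi0 n : forall A, comp (pi0 _) (Lmn n A) = pibs n (fun _ => false) A.
Proof.
  elim: n => [|n IHn] A /=; first exact: comp_id_r.
  by rewrite comp_assoc Lm_pi0 -tensm_comp comp_id_r IHn.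
Qed.

Lemma sigma_eq {Z A : Ob C} (h1 h2 : Hom C Z (S A)) :
  comp (pi0 A) h1 = comp (pi0 A) h2 -> comp (pi1 A) h1 = comp (pi1 A) h2 ->
  comp (sigma A) h1 = comp (sigma A) h2.
Proof. by move=> e0 e1; rewrite (pi_jmono _ _ _ _ _ e0 e1). Qed.

Lemma Lm_nat {A B A' B' : Ob C} (f : Hom C A A') (g : Hom C B B') :
  comp (Sm (tensm f g)) (Lm C A B) = comp (Lm C A' B') (tensm (Sm f) (Sm g)).
Proof.
  apply: pi_jmono.
  - by rewrite !comp_assoc pi0_nat Lm_pi0 -comp_assoc Lm_pi0 -!tensm_comp !pi0_nat.
  - rewrite !comp_assoc pi1_nat.
    case: (Lm_pi1 C A B) => w [w0 [w1 ws]].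
    case: (Lm_pi1 C A' B') => w' [w0' [w1' ws']].
    rewrite -(comp_assoc _ _ _ _ _ (tensm f g)) -ws -ws'.
    case: (sum_comp _ _ _ _ _ (tensm f g) w (idm _)) => h1 [a0 [a1 a2]].
    case: (sum_comp _ _ _ _ _ (idm _) w' (tensm (Sm f) (Sm g))) => h2 [b0 [b1 b2]].
    rewrite comp_id_r in a2; rewrite comp_id_l in b2.
    rewrite -a2 -b2; apply: sigma_eq.
    + by rewrite a0 b0 comp_id_r comp_id_l w0 w0' -!tensm_comp pi1_nat pi0_nat.
    + by rewrite a1 b1 comp_id_r comp_id_l w1 w1' -!tensm_comp pi1_nat pi0_nat.
Qed.

Lemma IsSum_comp {A B A' B' : Ob C} (g : Hom C B B') (u : Hom C A' A) :
  forall (fs : list (Hom C A B)) s, IsSum C fs s ->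
  IsSum C (map (fun f => comp g (comp f u)) fs) (comp g (comp s u)).
Proof.
  elim=> [|f fs IH] s /=; first by move=> ->; rewrite zero_comp_l zero_comp_r.
  case=> t [Ht [h [h0 [h1 h2]]]].
  exists (comp g (comp t u)); split; first exact: IH.
  case: (sum_comp _ _ _ _ _ g h u) => h' [a0 [a1 a2]].
  by exists h'; rewrite a0 a1 a2 h0 h1 h2.
Qed.

Lemma IsSum_tens_r {A B A' B' : Ob C} (k : Hom C A' B') :
  forall (fs : list (Hom C A B)) s, IsSum C fs s ->
  IsSum C (map (fun f => tensm k f) fs) (tensm k s).
Proof.
  elim=> [|f fs IH] s /=; first by move=> ->; rewrite zero_tens_r.
  case=> t [Ht [h [h0 [h1 h2]]]].
  exists (tensm k t); split; first exact: IH.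
  case: (sum_tens_r _ _ _ _ _ k h) => h' [a0 [a1 a2]].
  by exists h'; rewrite a0 a1 a2 h0 h1 h2.
Qed.

Lemma Lmn_pi1 n : forall A,
  IsSum C (map (fun j => pibs n (fun i => Nat.eqb i j) A) (seq 0 n.+1))
        (comp (pi1 _) (Lmn n A)).
Proof.
  elim: n => [|n IHn] A.
  - exists (zero _ _); split=> //.
    case: (sum_zero _ _ _ (pi1 (A 0))) => h [h0 [h1 h2]].
    by exists h; rewrite h0 h1 h2 comp_id_r.
  - rewrite /= -seq_shift map_map.
    exists (tensm (pi0 (A 0)) (comp (pi1 _) (Lmn n (shift C A)))); split.
    + by have := IsSum_tens_r (pi0 (A 0)) _ _ (IHn (shift C A)); rewrite map_map.
    + case: (Lm_pi1 C (A 0) (tensn C n (shift C A))) => w [w0 [w1 ws]].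
      exists (comp w (tensm (idm _) (Lmn n (shift C A)))).
      by rewrite !comp_assoc w0 w1 ws -!tensm_comp Lmn_pi0 !comp_id_r.
Qed.

Lemma Swn_S n A : Swn C n.+1 A
  = pair (Sm (pr1 _ _)) (comp (Swn C n (shift C A)) (Sm (pr2 (A 0) (withn C n (shift C A))))).
Proof.
  rewrite /Swn /= tuplen_comp; congr pair.
  by apply: tuplen_ext => k; rewrite /= Sm_comp.
Qed.

Lemma pair_factor_snd {Z W A B : Ob C} (a : Hom C Z A) (b : Hom C W B) (c : Hom C Z W) :
  pair a (comp b c) = comp (pair (comp (idm A) (pr1 A W)) (comp b (pr2 A W))) (pair a c).
Proof. by rewrite pair_comp -!comp_assoc pair_pr1 pair_pr2 comp_id_l. Qed.

Lemma dd_seelyn_inv n : forall A,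
  comp (Sm (seelyn_inv C n A)) (dd (withn C n A))
  = comp (Lmn n (fun i => bang (A i)))
      (comp (dds n A) (comp (seelyn_inv C n (fun i => S (A i))) (bangm (Swn C n A)))).
Proof.
  rewrite /dds; elim: n => [|n IHn] A.
  - by rewrite /Swn /= !Sm_id bangm_id !comp_id_l !comp_id_r.
  - rewrite Swn_S /= Sm_comp -!comp_assoc dd_m2 (comp_eqA _ _ _ (Lm_nat _ _)) Sm_id.
    rewrite -!comp_assoc (comp_eqA _ _ _ (eq_sym (tensm_comp _ _ _ _ _ _ _ _ _ _ _))).
    rewrite (IHn (shift C A)) comp_id_l pair_factor_snd bangm_comp.
    rewrite (comp_eqA _ _ _ (m2_inv_nat _ _)) bangm_id -!comp_assoc.
    rewrite !(comp_eqA _ _ _ (eq_sym (tensm_comp _ _ _ _ _ _ _ _ _ _ _))).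
    by rewrite -!comp_assoc !comp_id_l !comp_id_r.
Qed.

Section Multilinear.
Variables (n : nat) (X : nat -> Ob C) (Y : Ob C) (l : Hom C (tensn C n X) Y).

Lemma kcomp_pib_Dk_Mlin b :
  kcomp C (lam C (pib b Y)) (Dk C (Mlin C n X Y l))
  = comp (comp l (ders n X))
      (comp (comp (pib b _) (Lmn n (fun i => bang (X i))))
         (comp (dds n X) (comp (seelyn_inv C n (fun i => S (X i))) (bangm (Swn C n X))))).
Proof.
  rewrite kcomp_lam_l /Dk /Mlin !Sm_comp -!comp_assoc.
  rewrite (comp_eqA _ _ _ (pib_nat b l)) -!comp_assoc (comp_eqA _ _ _ (pib_nat b _)).
  by rewrite -!comp_assoc dd_seelyn_inv.
Qed.

Lemma kcomp_Mlin_withKn_pib (b : nat -> bool) (f : forall i, Hom C (bang (S (X i))) (X i)) :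
  (forall i, f i = lam C (pib (b i) (X i))) ->
  kcomp C (Mlin C n X Y l) (kcomp C (withKn C n (fun i => S (X i)) X f) (lam C (Swn C n X)))
  = comp (comp l (ders n X))
      (comp (pibs n b (fun i => bang (X i)))
         (comp (dds n X) (comp (seelyn_inv C n (fun i => S (X i))) (bangm (Swn C n X))))).
Proof.
  move=> fE.
  have -> : withKn C n (fun i => S (X i)) X f
          = withKn C n (fun i => S (X i)) X (fun i => lam C (pib (b i) (X i))).
  { by apply: tuplen_ext => i; rewrite fE. }
  rewrite withKn_lam kcomp_lam_l /lam comp_assoc kcomp_lam_r /Mlin bangm_comp.
  rewrite -!comp_assoc (comp_eqA _ _ _ (seelyn_inv_nat n _ X (fun i => pib (b i) (X i)))).
  by rewrite -!comp_assoc (comp_eqA _ _ _ (ders_bangm_pibs n b X)) -!comp_assoc.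
Qed.

End Multilinear.
End Development.

Theorem mainTheorem13 (C : CDRC) (n : nat) (X : nat -> Ob C) (Y : Ob C)
    (l : Hom C (tensn C n X) Y) :
  kcomp C (lam C (pi0 Y)) (Dk C (Mlin C n X Y l))
    = kcomp C (Mlin C n X Y l)
        (kcomp C (withKn C n (fun i => S (X i)) X (fun i => lam C (pi0 (X i))))
           (lam C (Swn C n X)))
  /\
  IsSum C
    (map (fun j =>
            kcomp C (Mlin C n X Y l)
              (kcomp C
                 (withKn C n (fun i => S (X i)) X
                    (fun i => if Nat.eqb i j then lam C (pi1 (X i)) else lam C (pi0 (X i))))
                 (lam C (Swn C n X))))
         (seq 0 (Datatypes.S n)))
    (kcomp C (lam C (pi1 Y)) (Dk C (Mlin C n X Y l))).
Proof.
  split.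
  - rewrite (kcomp_pib_Dk_Mlin n X Y l false).
    by rewrite (kcomp_Mlin_withKn_pib n X Y l (fun _ => false)) // Lmn_pi0.
  - rewrite (kcomp_pib_Dk_Mlin n X Y l true).
    rewrite (map_ext _ _ (fun j =>
      kcomp_Mlin_withKn_pib n X Y l (fun i => Nat.eqb i j) _ (fun i => lam_if_pi _ _))).
    have := IsSum_comp (comp l (ders n X))
      (comp (dds n X) (comp (seelyn_inv C n (fun i => S (X i))) (bangm (Swn C n X))))
      _ _ (Lmn_pi1 n _).
    by rewrite map_map.
Qed.
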